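(* Let $(k,\nu)$ be a valued field with value group contained in $\mathbb{Z}$, let $V$ be a $k$-vector space of finite dimension $r$ with a value function $\operatorname{val}\colon V\to\mathbb{Z}\cup\{\infty\}$, and let $x\in k$ with $\nu(x)=1$. Assume that the completion $V_\nu$ of $V$ has dimension $r$ over the completion $k_\nu$ of $k$. Consider the following procedure, applied to a $k$-basis $B_1,\dots,B_r$ of $V$: for $d=1,\dots,r$ in turn, first replace $B_d$ by $x^{-\operatorname{val}(B_d)}B_d$; then, as long as there exist $\alpha_1,\dots,\alpha_{d-1}\in k$ with $\operatorname{val}(\alpha_1B_1+\cdots+\alpha_{d-1}B_{d-1}+B_d)>0$, choose such $\alpha_1,\dots,\alpha_{d-1}$ and replace $B_d$ by $x^{-1}(\alpha_1B_1+\cdots+\alpha_{d-1}B_{d-1}+B_d)$. Finally return $B_1,\dots,B_r$. Then this procedure terminates (each of its while-loops performs only finitely many iterations, regardless of the choices of the $\alpha_i$).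
   Context: A valuation $\nu\colon k\to\mathbb{Z}\cup\{\infty\}$ on a field $k$ of characteristic zero satisfies $\nu(a)=\infty\iff a=0$, $\nu(ab)=\nu(a)+\nu(b)$, $\nu(a+b)\ge\min\{\nu(a),\nu(b)\}$. A value function $\operatorname{val}\colon V\to\mathbb{Z}\cup\{\infty\}$ on a $k$-vector space satisfies $\operatorname{val}(v)=\infty\iff v=0$, $\operatorname{val}(av)=\nu(a)+\operatorname{val}(v)$, $\operatorname{val}(v+w)\ge\min\{\operatorname{val}(v),\operatorname{val}(w)\}$. The $\nu$-adic absolute value $|a|=e^{-\nu(a)}$ defines a topology on $k$; $k_\nu$ denotes the completion of $k$ (Cauchy sequences modulo null sequences), with $\nu$ extended by continuity. $V$ carries the norm $\|v\|=e^{-\operatorname{val}(v)}$, and $V_\nu$ denotes the $k_\nu$-vector space obtained from $V$ by scalar extension, i.e. its completion with respect to this norm (for a basis $B_1,\dots,B_r$ of $V$, it is the $k_\nu$-span of $B_1,\dots,B_r$); in general $\dim_{k_\nu}V_\nu\le\dim_k V$. *)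

From HB Require Import structures.
From mathcomp Require Import all_boot all_order all_algebra.
From mathcomp Require Import constructive_ereal.
Set Implicit Arguments. Unset Strict Implicit. Unset Printing Implicit Defensive.
Import Order.TTheory GRing.Theory Num.Theory.
Local Open Scope ring_scope.
Local Open Scope ereal_scope.

(* Z ∪ {∞} is modelled by  \bar int  (+oo = ∞). *)

Definition is_valuation (k : fieldType) (nu : k -> \bar int) : Prop :=
  [/\ forall a : k, nu a = +oo <-> a = 0%R,
      forall a b : k, nu (a * b)%R = nu a + nu b &
      forall a b : k, Order.min (nu a) (nu b) <= nu (a + b)%R].

Definition is_value_function (k : fieldType) (V : vectType k)
  (nu : k -> \bar int) (val : V -> \bar int) : Prop :=
  [/\ forall v : V, val v = +oo <-> v = 0%R,
      forall (a : k) (v : V), val (a *: v)%R = nu a + val v &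
      forall v w : V, Order.min (val v) (val w) <= val (v + w)%R].

Definition cauchy_seq (k : fieldType) (nu : k -> \bar int) (a : nat -> k) :=
  forall M : int, exists N : nat, forall m n : nat,
    (N <= m)%N -> (N <= n)%N -> (M%:E <= nu (a m - a n)%R).

Definition null_seq (T : Type) (w : T -> \bar int) (a : nat -> T) :=
  forall M : int, exists N : nat, forall n : nat, (N <= n)%N -> M%:E <= w (a n).

(* dim_{k_nu} V_nu = dim_k V.  V_nu is the k_nu-span of the images [B_i] of a
   k-basis B of V in the completion of V (Cauchy sequences of V modulo null
   sequences); a k_nu-combination  sum_i [a_i] [B_i]  (with a_i Cauchy in k)
   is the class of the sequence  n |-> sum_i a_i(n) B_i.  The dimension is the
   full one iff the [B_i] are k_nu-linearly independent, i.e.: *)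
Definition completion_full_dim (k : fieldType) (V : vectType k)
  (nu : k -> \bar int) (val : V -> \bar int) : Prop :=
  forall B : (\dim (fullv : {vspace V})).-tuple V, basis_of fullv B ->
  forall a : 'I_(\dim (fullv : {vspace V})) -> nat -> k,
    (forall i, cauchy_seq nu (a i)) ->
    null_seq val (fun n => (\sum_i a i n *: tnth B i)%R) ->
    forall i, null_seq nu (a i).

(* Indices are 0-based: the paper's d = 1..r is our i = 0..r-1. *)
Inductive phase := Start of nat | Loop of nat.

Definition upd (r : nat) (V : Type) (B : 'I_r -> V) (i : 'I_r) (v : V) : 'I_r -> V :=
  fun j => if j == i then v else B j.

Definition comb (k : fieldType) (V : vectType k) (r : nat)
  (B : 'I_r -> V) (i : 'I_r) (alpha : 'I_r -> k) : V :=
  (\sum_(j < r | (j < i)%N) alpha j *: B j + B i)%R.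

Inductive proc_step (k : fieldType) (V : vectType k) (r : nat)
  (val : V -> \bar int) (x : k) :
  phase * ('I_r -> V) -> phase * ('I_r -> V) -> Prop :=
| step_normalize (i : 'I_r) (B : 'I_r -> V) :
    proc_step val x (Start i, B)
      (Loop i, upd B i ((x ^ (- fine (val (B i))))%R *: B i)%R)
| step_loop (i : 'I_r) (B : 'I_r -> V) (alpha : 'I_r -> k) :
    0%:E < val (comb B i alpha) ->
    proc_step val x (Loop i, B) (Loop i, upd B i (x^-1 *: comb B i alpha)%R)
| step_exit (i : 'I_r) (B : 'I_r -> V) :
    (forall alpha : 'I_r -> k, ~ (0%:E < val (comb B i alpha))) ->
    proc_step val x (Loop i, B) (Start i.+1, B).
(* The state (Start r, B) has no successor: the procedure returns B. *)

Definition terminates (k : fieldType) (V : vectType k) (r : nat)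
  (val : V -> \bar int) (x : k) (s : phase * ('I_r -> V)) : Prop :=
  Acc (fun s' s0 => proc_step val x s0 s') s.

From HB Require Import structures.
From mathcomp Require Import all_boot all_order all_algebra.
From mathcomp Require Import constructive_ereal.
From mathcomp Require Import zify.
From Stdlib Require Import Classical ClassicalEpsilon.
Import Order.TTheory GRing.Theory Num.Theory.
Local Open Scope ring_scope.
Local Open Scope ereal_scope.

(* The first i vectors of a basis control their coefficients: there is C with
   nu(beta_j) >= val(sum_j beta_j B_j) - C for all beta.  Given control of B_1..B_{i-1}, the values val(B_i + sum_{j<i} alpha_j B_j)
   are bounded above: otherwise combinations of unbounded value would have
   Cauchy coefficient sequences and a null sum, so by the full dimension of the
   completion all coefficients would tend to 0, yet the coefficient of B_i is 1.
   That upper bound, with control of B_1..B_{i-1}, gives control of B_1..B_i.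
   Each iteration of the while-loop for B_d keeps a basis and lowers this upper
   bound for d by one (val(x^-1 v) = val v - 1), while an iteration needs a
   combination of positive value; so the loop stops. *)

Section Valuation.
Context {k : fieldType} {nu : k -> \bar int}.
Hypothesis nu_val : is_valuation nu.

Lemma valuation0 : nu 0%R = +oo.
Proof. by case: nu_val => nu_oo _ _; apply/nu_oo. Qed.

Lemma valuation_fin {a : k} : a != 0%R -> nu a = (fine (nu a))%:E.
Proof.
move=> a_neq0; case: nu_val => nu_oo nuM _.
case nu_a: (nu a) => [z| |] //=.
- by move/nu_oo: nu_a => /eqP; rewrite (negbTE a_neq0).
- by have := nuM 0%R a; rewrite mul0r nu_a valuation0.
Qed.

Lemma valuation1 : nu 1%R = 0.
Proof.
have nu1_fin := @valuation_fin 1%R (oner_neq0 k); case: nu_val => _ nuM _.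
have := nuM 1%R 1%R; rewrite mulr1 nu1_fin -EFinD => -[nu1_eq].
by rewrite nu1_fin /=; congr (_%:E); lia.
Qed.

Lemma valuationN1 : nu (-1)%R = 0.
Proof.
have nuN1_fin := @valuation_fin (-1)%R (ltac:(by rewrite oppr_eq0 oner_eq0)).
case: nu_val => _ nuM _; have := nuM (-1)%R (-1)%R.
rewrite mulrNN mulr1 valuation1 nuN1_fin -EFinD => -[nuN1_eq].
by rewrite nuN1_fin /=; congr (_%:E); lia.
Qed.

Lemma uniformizer_neq0 {x : k} : nu x = 1%:E -> x != 0%R.
Proof. by move=> nu_x; apply/eqP => x_eq0; rewrite x_eq0 valuation0 in nu_x. Qed.

Lemma valuationV {x : k} : nu x = 1%:E -> nu x^-1%R = (-1)%:E.
Proof.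
move=> nu_x; have x_neq0 := uniformizer_neq0 nu_x.
have nuV_fin := valuation_fin (invr_neq0 x_neq0).
have := valuation1; case: nu_val => _ nuM _.
rewrite -(mulfV x_neq0) nuM nu_x nuV_fin -EFinD => -[nuV_eq].
by rewrite nuV_fin /=; congr (_%:E); lia.
Qed.

End Valuation.

Section ValueFunction.
Context {k : fieldType} {V : vectType k} {nu : k -> \bar int} {val : V -> \bar int}.
Hypotheses (nu_val : is_valuation nu) (val_vf : is_value_function nu val).

Lemma value0 : val 0%R = +oo.
Proof. by case: val_vf => val_oo _ _; apply/val_oo. Qed.

Lemma value_fin {v : V} : v != 0%R -> val v = (fine (val v))%:E.
Proof.
move=> v_neq0; case: val_vf => val_oo valZ _.
case val_v: (val v) => [z| |] //=.
- by move/val_oo: val_v => /eqP; rewrite (negbTE v_neq0).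
- by have := valZ 0%R v; rewrite scale0r val_v value0 (valuation0 nu_val).
Qed.

Lemma valueN (v : V) : val (- v)%R = val v.
Proof. by case: val_vf => _ valZ _; rewrite -scaleN1r valZ (valuationN1 nu_val) add0e. Qed.

Lemma value_ge_add (M : \bar int) (v w : V) :
  M <= val v -> M <= val w -> M <= val (v + w)%R.
Proof.
case: val_vf => _ _ valD Mv Mw.
by apply: le_trans (valD v w); rewrite le_min Mv Mw.
Qed.

End ValueFunction.

Section Combination.
Context {k : fieldType} {V : vectType k} {r : nat}.
Implicit Types (f : 'I_r -> V) (alpha beta : 'I_r -> k).

Definition comb_coef (i : 'I_r) alpha (j : 'I_r) : k :=
  if (j < i)%N then alpha j else (j == i)%:R.

Lemma comb_sumE f (i : 'I_r) alpha :
  comb f i alpha = (\sum_j comb_coef i alpha j *: f j)%R.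
Proof.
rewrite /comb [RHS](bigID (fun j : 'I_r => (j < i)%N)) /=; congr (_ + _)%R.
  by apply: eq_bigr => j j_lt_i; rewrite /comb_coef j_lt_i.
rewrite (bigD1 i) ?ltnn //= /comb_coef ltnn eqxx scale1r big1 ?addr0 //.
by move=> j /andP[/negbTE-> /negbTE->]; rewrite scale0r.
Qed.

Lemma combB f (i : 'I_r) alpha beta :
  (comb f i alpha - comb f i beta =
   \sum_(j < r | (j < i)%N) (alpha j - beta j) *: f j)%R.
Proof.
rewrite /comb opprD addrACA subrr addr0 -sumrB.
by apply: eq_bigr => j _; rewrite scalerBl.
Qed.

Lemma big_ord_ltS (F : 'I_r -> V) (i : 'I_r) :
  (\sum_(j < r | (j < i.+1)%N) F j = \sum_(j < r | (j < i)%N) F j + F i)%R.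
Proof.
rewrite (bigD1 i) ?ltnSn //= addrC; congr (_ + _)%R.
by apply: eq_bigl => j; rewrite ltnS andbC ltn_neqAle -(inj_eq val_inj).
Qed.

Lemma comb_scale f (i : 'I_r) beta (b : k) : b != 0%R ->
  (\sum_(j < r | (j < i)%N) beta j *: f j + b *: f i =
   b *: comb f i (fun j => beta j / b))%R.
Proof.
move=> b_neq0; rewrite /comb scalerDr scaler_sumr; congr (_ + _)%R.
by apply: eq_bigr => j _; rewrite scalerA mulrC divfK.
Qed.

Lemma comb_upd f (i : 'I_r) (x : k) alpha beta : x != 0%R ->
  comb (upd f i (x^-1 *: comb f i alpha)%R) i beta =
  (x^-1 *: comb f i (fun j => x * beta j + alpha j))%R.
Proof.
move=> x_neq0; rewrite {1 3}/comb /upd eqxx !scalerDr !scaler_sumr addrA.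
congr (_ + _)%R; rewrite -big_split; apply: eq_bigr => j j_lt_i /=.
by rewrite (ltn_eqF j_lt_i : (j == i) = false) !scalerA mulrDr mulrA mulVf // mul1r scalerDl.
Qed.

End Combination.

Section Basis.
Context {k : fieldType} {V : vectType k}.
Local Notation n := (\dim (fullv : {vspace V})).
Local Notation is_basis B := (basis_of fullv (mktuple B)).
Implicit Types B : 'I_n -> V.

Lemma basis_mem_span B j : B j \in <<mktuple B>>%VS.
Proof. by apply: memv_span; rewrite -(tnth_mktuple B j) mem_tnth. Qed.

Lemma basis_of_span {B B'} :
  is_basis B -> (forall j, B j \in <<mktuple B'>>%VS) -> is_basis B'.
Proof.
move=> B_basis B_B'; rewrite basisEdim size_tuple leqnn andbT.
apply: (@subv_trans _ _ <<mktuple B>>%VS); first by rewrite (span_basis B_basis).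
by apply/span_subvP => _ /tnthP[j ->]; rewrite tnth_mktuple.
Qed.

Lemma basis_upd_scale B i (c : k) :
  c != 0%R -> is_basis B -> is_basis (upd B i (c *: B i)%R).
Proof.
move=> c_neq0 B_basis; set B' := upd _ _ _; apply: (basis_of_span B_basis) => j.
have [->|j_neq_i] := eqVneq j i; last first.
  have -> : B j = B' j by rewrite /B' /upd (negbTE j_neq_i).
  exact: basis_mem_span.
have -> : B i = (c^-1 *: B' i)%R by rewrite /B' /upd eqxx scalerA mulVf // scale1r.
by rewrite memvZ ?basis_mem_span.
Qed.

Lemma basis_upd_comb B i (x : k) alpha :
  x != 0%R -> is_basis B -> is_basis (upd B i (x^-1 *: comb B i alpha)%R).
Proof.
move=> x_neq0 B_basis; set B' := upd _ _ _; apply: (basis_of_span B_basis) => j.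
have [->|j_neq_i] := eqVneq j i; last first.
  have -> : B j = B' j by rewrite /B' /upd (negbTE j_neq_i).
  exact: basis_mem_span.
have -> : B i = (x *: B' i - \sum_(l < n | (l < i)%N) alpha l *: B' l)%R.
  have -> : (\sum_(l < n | (l < i)%N) alpha l *: B' l =
             \sum_(l < n | (l < i)%N) alpha l *: B l)%R.
    by apply: eq_bigr => l l_lt_i; rewrite /B' /upd (ltn_eqF l_lt_i : (l == i) = false).
  by rewrite /B' /upd eqxx scalerA mulfV // scale1r /comb addrAC subrr add0r.
rewrite memvB ?memvZ ?basis_mem_span //.
by apply: memv_suml => l _; rewrite memvZ ?basis_mem_span.
Qed.

End Basis.

Definition coef_controlled {k : fieldType} {V : vectType k}
    (nu : k -> \bar int) (val : V -> \bar int) {r : nat}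
    (f : 'I_r -> V) (i : nat) (C : int) : Prop :=
  forall (beta : 'I_r -> k) (M : int),
    M%:E <= val (\sum_(j < r | (j < i)%N) beta j *: f j)%R ->
    forall j : 'I_r, (j < i)%N -> (M - C)%:E <= nu (beta j).

Section CoefficientControl.
Context {k : fieldType} {V : vectType k} {nu : k -> \bar int} {val : V -> \bar int}.
Hypotheses (nu_val : is_valuation nu) (val_vf : is_value_function nu val).
Context {r : nat}.
Implicit Types (f : 'I_r -> V) (alpha beta : 'I_r -> k).

Lemma last_coef_bound {f} {i : 'I_r} {N M : int} {beta} :
  (forall alpha, val (comb f i alpha) <= N%:E) ->
  M%:E <= val (\sum_(j < r | (j < i)%N) beta j *: f j + beta i *: f i)%R ->
  (M - N)%:E <= nu (beta i).
Proof.
move=> comb_le_N; have [->|b_neq0] := eqVneq (beta i) 0%R.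
  by rewrite (valuation0 nu_val) leey.
rewrite comb_scale //; case: val_vf => _ valZ _; rewrite valZ (valuation_fin nu_val b_neq0).
have := comb_le_N (fun j => beta j / beta i)%R.
by case: (val _) => [c| |] //=; rewrite -EFinD !lee_fin => *; lia.
Qed.

Lemma coef_controlledS {f} {i : 'I_r} {C N : int} :
  f i != 0%R -> coef_controlled nu val f i C ->
  (forall alpha, val (comb f i alpha) <= N%:E) ->
  exists C', coef_controlled nu val f i.+1 C'.
Proof.
move=> f_neq0 f_ctrl comb_le_N; have f_fin := value_fin nu_val val_vf f_neq0.
set F := fine (val (f i)) in f_fin.
exists (`|C| + `|N| + `|N - F|)%R => beta M; rewrite big_ord_ltS => M_le.
have beta_i_ge := last_coef_bound comb_le_N M_le.
move=> j; rewrite ltnS leq_eqVlt => /orP[/eqP/val_inj->|j_lt_i].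
  by apply: le_trans beta_i_ge; rewrite lee_fin; lia.
set S := (\sum_(j < r | (j < i)%N) beta j *: f j)%R in M_le.
have S_ge : (M - `|N - F|)%:E <= val S.
  rewrite -[S](addrK (beta i *: f i)%R).
  apply: (value_ge_add val_vf); first by apply: le_trans M_le; rewrite lee_fin; lia.
  case: val_vf => _ valZ _; rewrite (valueN nu_val val_vf) valZ f_fin.
  move: beta_i_ge; case: (nu _) => [b| |] //=; rewrite ?addye ?leey //.
  by rewrite -EFinD !lee_fin => *; lia.
by apply: le_trans (f_ctrl beta _ S_ge j j_lt_i); rewrite lee_fin; lia.
Qed.

End CoefficientControl.

Section Completion.
Context {k : fieldType} {V : vectType k} {nu : k -> \bar int} {val : V -> \bar int}.
Hypotheses (nu_val : is_valuation nu) (val_vf : is_value_function nu val).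
Hypothesis full_dim : completion_full_dim nu val.
Local Notation n := (\dim (fullv : {vspace V})).
Local Notation is_basis B := (basis_of fullv (mktuple B)).
Implicit Types (f : 'I_n -> V) (alpha : 'I_n -> k).

Lemma comb_value_not_unbounded {f} {i : 'I_n} {C : int} {A : nat -> 'I_n -> k} :
  is_basis f -> coef_controlled nu val f i C ->
  ~ (forall m : nat, (m%:Z)%:E < val (comb f i (A m))).
Proof.
move=> f_basis f_ctrl A_gt.
pose a j m := comb_coef i (A m) j.
have a_cauchy j : cauchy_seq nu (a j).
  move=> M; exists (absz (M + C)%R) => m m' m_ge m'_ge; rewrite /a /comb_coef.
  case: ifP => j_lt_i; last by rewrite subrr (valuation0 nu_val) leey.
  rewrite -[M](addrK C); apply: (f_ctrl (fun j => A m j - A m' j)%R) j_lt_i.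
  rewrite -combB; apply: (value_ge_add val_vf); rewrite ?(valueN nu_val val_vf);
    by apply/ltW/le_lt_trans/A_gt; rewrite lee_fin; lia.
have sum_null : null_seq val (fun m => \sum_j a j m *: tnth (mktuple f) j)%R.
  move=> M; exists (absz M) => m m_ge.
  under eq_bigr do rewrite tnth_mktuple; rewrite -comb_sumE.
  by apply/ltW/le_lt_trans/A_gt; rewrite lee_fin; lia.
have [N] := full_dim _ f_basis a a_cauchy sum_null i 1%Z.
by move/(_ N (leqnn N)); rewrite /a /comb_coef ltnn eqxx (valuation1 nu_val).
Qed.

Lemma comb_value_bounded {f} {i : 'I_n} {C : int} :
  is_basis f -> coef_controlled nu val f i C ->
  exists N : int, forall alpha, val (comb f i alpha) <= N%:E.
Proof.
move=> f_basis f_ctrl; apply: NNPP => unbounded.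
have A_ex (m : nat) : exists alpha, (m%:Z)%:E < val (comb f i alpha).
  apply: NNPP => no_alpha; apply: unbounded; exists m%:Z => alpha.
  by rewrite leNgt; apply/negP => lt_m; apply: no_alpha; exists alpha.
have [A A_gt] := choice _ A_ex.
exact: comb_value_not_unbounded f_basis f_ctrl A_gt.
Qed.

Lemma basis_coef_controlled {f} {i : nat} :
  is_basis f -> (i <= n)%N -> exists C, coef_controlled nu val f i C.
Proof.
move=> f_basis; elim: i => [|i IH] i_le; first by exists 0%R.
have [C f_ctrl] := IH (ltnW i_le).
pose i' : 'I_n := Ordinal i_le.
have [N comb_le_N] := comb_value_bounded f_basis f_ctrl (i := i').
have f_neq0 : f i' != 0%R.
  by apply: (free_not0 (basis_free f_basis)); rewrite -(tnth_mktuple f i') mem_tnth.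
exact: (coef_controlledS nu_val val_vf f_neq0 f_ctrl comb_le_N).
Qed.

Lemma basis_comb_value_bounded {B} (i : 'I_n) :
  is_basis B -> exists N : nat, forall alpha, val (comb B i alpha) <= (N%:Z)%:E.
Proof.
move=> B_basis; have [C B_ctrl] := basis_coef_controlled B_basis (ltnW (ltn_ord i)).
have [N comb_le_N] := comb_value_bounded B_basis B_ctrl.
exists (absz N) => alpha; apply: le_trans (comb_le_N alpha) _; rewrite lee_fin; lia.
Qed.

End Completion.

Section ProcedureSteps.
Context {k : fieldType} {V : vectType k} {r : nat}.
Variables (val : V -> \bar int) (x : k).

Lemma Loop_stepP (i : 'I_r) (B : 'I_r -> V) s :
  proc_step val x (Loop i, B) s ->
  (exists2 alpha, 0%:E < val (comb B i alpha) &
     s = (Loop i, upd B i (x^-1 *: comb B i alpha)%R))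
  \/ s = (Start i.+1, B).
Proof.
move=> step; remember (Loop i, B) as s0 eqn:s0E.
case: step s0E => [i' B'|i' B' alpha val_gt0|i' B' _] [] // /val_inj <- <-.
  by left; exists alpha.
by right.
Qed.

Lemma Start_stepP (i : nat) (B : 'I_r -> V) s :
  proc_step val x (Start i, B) s ->
  exists2 i' : 'I_r, i = i' &
    s = (Loop i', upd B i' ((x ^ (- fine (val (B i'))))%R *: B i')%R).
Proof.
move=> step; remember (Start i, B) as s0 eqn:s0E.
by case: step s0E => [i' B'|i' B' alpha _|i' B' _] [] // <- <-; exists i'.
Qed.

End ProcedureSteps.

Section Termination.
Context {k : fieldType} {V : vectType k} {nu : k -> \bar int} {val : V -> \bar int} {x : k}.
Hypotheses (nu_val : is_valuation nu) (val_vf : is_value_function nu val).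
Hypotheses (nu_x : nu x = 1%:E) (full_dim : completion_full_dim nu val).
Local Notation n := (\dim (fullv : {vspace V})).
Local Notation is_basis B := (basis_of fullv (mktuple B)).
Implicit Types B : 'I_n -> V.

Lemma loop_terminates (i : 'I_n) :
  (forall B, is_basis B -> terminates val x (Start i.+1, B)) ->
  forall (m : nat) B, is_basis B ->
  (forall alpha, val (comb B i alpha) <= (m%:Z)%:E) ->
  terminates val x (Loop i, B).
Proof.
have x_neq0 := uniformizer_neq0 nu_val nu_x.
move=> next_terminates; elim=> [|m IH] B B_basis comb_le_m;
  constructor => s /Loop_stepP [[alpha val_gt0 ->]|->]; try exact: next_terminates.
  by have := lt_le_trans val_gt0 (comb_le_m alpha); rewrite ltxx.
apply: IH; first exact: basis_upd_comb.
move=> beta; rewrite comb_upd //; case: val_vf => _ valZ _.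
rewrite valZ (valuationV nu_val nu_x).
have := comb_le_m (fun j => x * beta j + alpha j)%R.
by case: (val _) => [c| |] //=; rewrite -?EFinD !lee_fin => *; lia.
Qed.

Lemma start_terminates (i : nat) B : is_basis B -> terminates val x (Start i, B).
Proof.
have x_neq0 := uniformizer_neq0 nu_val nu_x.
move: {2}(n - i)%N (erefl (n - i)%N) => d; elim: d i B => [|d IH] i B d_eq B_basis;
  constructor => s /Start_stepP [i' i_eq ->]; first by have := ltn_ord i'; lia.
set B' := upd _ _ _.
have B'_basis : is_basis B' by apply: basis_upd_scale => //; exact: expfz_neq0.
have [m comb_le_m] := basis_comb_value_bounded nu_val val_vf full_dim i' B'_basis.
apply: (loop_terminates i' _ m B' B'_basis comb_le_m) => B'' B''_basis.
by apply: IH B''_basis; lia.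
Qed.

End Termination.

Theorem mainTheorem3 (k : fieldType) (V : vectType k)
  (nu : k -> \bar int) (val : V -> \bar int) (x : k)
  (B : (\dim (fullv : {vspace V})).-tuple V) :
  [pchar k] =i pred0 ->
  is_valuation nu ->
  is_value_function nu val ->
  nu x = 1%:E ->
  completion_full_dim nu val ->
  basis_of fullv B ->
  terminates val x (Start 0, fun i => tnth B i).
Proof.
move=> _ nu_val val_vf nu_x full_dim B_basis.
apply: (start_terminates nu_val val_vf nu_x full_dim).
by rewrite (_ : mktuple _ = B) //; apply: eq_from_tnth => i; rewrite tnth_mktuple.
Qed.
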